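(* Let $n\ge2$, $s\in\mathbb{R}$, $0\le b<\frac12$ and $0<\varepsilon\le1-2b$. For $(\xi',\xi_n,\tau)\in\mathbb{R}^{n-1}\times\mathbb{R}\times\mathbb{R}$ define $$Q_1(\xi',\xi_n,\tau)=\chi_{\{1<\xi_n^2\le\frac12|\tau+\xi'^2|\}}\frac{(1+\xi'^2+|\tau+\xi'^2|)^s(1+|\tau+\xi'^2|)^{1/2}\xi_n}{(1+|\tau+\xi'^2+\xi_n^2|)^{2-\varepsilon}}.$$ Then for all $(\xi',\xi_n,\tau)\in\mathbb{R}^{n+1}$, $$Q_1\lesssim\begin{cases}(1+\xi'^2+\xi_n^2)^s(1+|\tau+\xi'^2+\xi_n^2|)^{-2b},&-\frac12\le s\le\frac12,\\ \big[(1+\xi'^2+\xi_n^2)^s+(1+|\tau|)^s\big](1+|\tau+\xi'^2+\xi_n^2|)^{-2b},&s<-\frac12\text{ or }s>\frac12.\end{cases}$$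
   Context: $\xi'^2=|\xi'|^2$; $\chi_A$ is the characteristic function of the set $A$ (here the set of $(\xi',\xi_n,\tau)$ with $1<\xi_n^2\le\frac12|\tau+\xi'^2|$). *)

From HB Require Import structures.
From mathcomp Require Import all_boot all_order all_algebra.
From mathcomp Require Import all_classical all_reals all_analysis.
Set Implicit Arguments. Unset Strict Implicit. Unset Printing Implicit Defensive.
Import Order.TTheory GRing.Theory Num.Theory.
Local Open Scope ring_scope.

Definition sqnorm (R : realType) (m : nat) (xi' : 'rV[R]_m) : R :=
  \sum_(i < m) (xi' 0 i) ^+ 2.

Definition Q1 (R : realType) (m : nat) (s eps : R)
  (xi' : 'rV[R]_m) (xn tau : R) : R :=
  let a := sqnorm xi' in
  if (1 < xn ^+ 2) && (xn ^+ 2 <= `|tau + a| / 2) then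
    (1 + a + `|tau + a|) `^ s * (1 + `|tau + a|) `^ (2^-1) * xn
      / (1 + `|tau + a + xn ^+ 2|) `^ (2 - eps)
  else 0.

Definition Q1bound (R : realType) (m : nat) (s b : R)
  (xi' : 'rV[R]_m) (xn tau : R) : R :=
  let a := sqnorm xi' in
  if (- 2^-1 <= s) && (s <= 2^-1) then
    (1 + a + xn ^+ 2) `^ s * (1 + `|tau + a + xn ^+ 2|) `^ (- (2 * b))
  else
    ((1 + a + xn ^+ 2) `^ s + (1 + `|tau|) `^ s)
      * (1 + `|tau + a + xn ^+ 2|) `^ (- (2 * b)).

(* On the support of the indicator, xn^2 <= |tau + xi'^2| / 2, so the time
   weights 1 + |tau + xi'^2 + xn^2| and 1 + |tau + xi'^2| agree up to a factor 2.
   As 2 - eps >= 1 + 2b, the (2 - eps)-th power of the first one therefore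
   dominates (1 + |tau + xi'^2|) (1 + |tau + xi'^2 + xn^2|)^(2b), which bounds Q1
   by (1 + |tau + xi'^2 + xn^2|)^(-2b) times
   (1 + xi'^2 + |tau + xi'^2|)^s xn / (1 + |tau + xi'^2|)^(1/2).
   Here xn <= (1 + |tau + xi'^2|)^(1/2).  For s <= 0 the power is at most
   (1 + xi'^2 + xn^2)^s, and for s >= 0 it is at most
   4^s [(1 + xi'^2 + xn^2)^s + (1 + |tau|)^s] as |tau + xi'^2| <= |tau| + xi'^2.
   For 0 <= s <= 1/2 the (1 + |tau|)^s term disappears by interpolating between
   (1 + xi'^2 + |tau + xi'^2|) xn^2 <= (1 + xi'^2 + xn^2)(1 + |tau + xi'^2|)
   and xn^2 <= 1 + |tau + xi'^2|. *)

From HB Require Import structures.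
From mathcomp Require Import all_boot all_order all_algebra.
From mathcomp Require Import all_classical all_reals all_analysis.
From mathcomp Require Import ring lra.
Set Implicit Arguments.
Unset Strict Implicit.
Unset Printing Implicit Defensive.
Import Order.TTheory GRing.Theory Num.Theory.
Local Open Scope ring_scope.

Section PowerInequalities.
Variable R : realType.
Implicit Types b eps r s u v x y : R.

Lemma le0_ger_powR s u v : s <= 0 -> 0 < u -> u <= v -> v `^ s <= u `^ s.
Proof.
move=> s_le0 u_gt0 uv; have v_gt0 := lt_le_trans u_gt0 uv.
rewrite -(opprK s) (powRN v) (powRN u) lef_pV2 ?posrE ?powR_gt0 //.
by apply: ge0_ler_powR uv; rewrite ?oppr_ge0 // nnegrE ltW.
Qed.

Lemma powR_addr_le s u v : 0 <= s -> 0 <= u -> 0 <= v ->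
  (u + v) `^ s <= 2 `^ s * (u `^ s + v `^ s).
Proof.
move=> s_ge0; wlog uv : u v / u <= v => [hwlog u_ge0 v_ge0|u_ge0 v_ge0].
  have [uv|/ltW vu] := leP u v; first exact: hwlog uv u_ge0 v_ge0.
  by rewrite addrC [u `^ s + _]addrC; exact: hwlog vu v_ge0 u_ge0.
have le_uv : (u + v) `^ s <= (2 * v) `^ s.
  by apply: ge0_ler_powR; rewrite ?nnegrE //; lra.
rewrite (le_trans le_uv) // powRM //; apply: ler_wpM2l; first exact: powR_ge0.
by rewrite lerDr powR_ge0.
Qed.

Lemma powR_interp_le s r (P X M Y : R) :
  0 <= s <= r -> 0 <= P -> 0 < X -> 0 <= M -> X <= Y -> P * X <= M * Y ->
  P `^ s * X `^ r <= M `^ s * Y `^ r.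
Proof.
move=> /andP[s_ge0 sr] P_ge0 X_gt0 M_ge0 XY PXMY; have Y_gt0 := lt_le_trans X_gt0 XY.
have [X_ge0 Y_ge0] := (ltW X_gt0, ltW Y_gt0).
have splitr (T : R) : 0 < T -> T `^ r = T `^ s * T `^ (r - s).
  by move=> T_gt0; rewrite -powRD ?subrKC // lt0r_neq0 ?implybT.
rewrite (splitr X X_gt0) (splitr Y Y_gt0) !mulrA -!powRM //.
apply: ler_pM; rewrite ?powR_ge0 //; apply: ge0_ler_powR;
  by rewrite ?subr_ge0 ?nnegrE ?mulr_ge0.
Qed.

Lemma normD_small_bounds (t y : R) : 0 <= y -> y <= `|t| / 2 ->
  (1 + `|t|) / 2 <= 1 + `|t + y| /\ 1 + `|t + y| <= 2 * (1 + `|t|).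
Proof.
move=> y_ge0 y_small; have := lerB_normD t y; have := ler_normD t y.
rewrite (ger0_norm y_ge0); have := normr_ge0 t; lra.
Qed.

Lemma comparable_powR_ratio_le b eps x y : 0 <= b -> 0 <= eps -> eps <= 1 - 2 * b ->
  1 <= x -> x / 2 <= y -> y <= 2 * x -> x / y `^ (2 - eps) <= 8 * y `^ (- (2 * b)).
Proof.
move=> b_ge0 eps_ge0 eps_le x_ge1 xy yx; have [x_gt0 y_gt0] : 0 < x /\ 0 < y by lra.
suff prod : x * y `^ (2 * b) <= 8 * y `^ (2 - eps).
  by rewrite powRN ler_pdivrMr ?powR_gt0 // mulrAC ler_pdivlMr ?powR_gt0.
have y2b : y `^ (2 * b) <= 2 * x `^ (2 * b).
  apply: le_trans (_ : (2 * x) `^ (2 * b) <= _).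
    by apply: ge0_ler_powR; rewrite ?nnegrE; lra.
  rewrite powRM; [|lra|lra]; apply: ler_wpM2r; first exact: powR_ge0.
  by rewrite -[leRHS]powRr1 //; apply: ler_powR; lra.
have xeps : x * x `^ (2 * b) <= x `^ (2 - eps).
  rewrite -{1}(powRr1 (ltW x_gt0)) -powRD ?lt0r_neq0 ?implybT //.
  apply: ler_powR; lra.
have yeps : x `^ (2 - eps) / 4 <= y `^ (2 - eps).
  apply: le_trans (_ : (x / 2) `^ (2 - eps) <= _); last first.
    by apply: ge0_ler_powR; rewrite ?nnegrE; lra.
  rewrite powRM; [|lra|lra]; apply: ler_wpM2l; first exact: powR_ge0.
  have quarter : (2^-1 : R) `^ 2 = 4^-1 by rewrite -[2]/(2%:R) powR_mulrn; lra.
  by rewrite -quarter ger_powR //; lra.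
have := powR_ge0 x (2 * b); nra.
Qed.

Lemma sqr_le_powR12 x y : 0 <= x -> x ^+ 2 <= y -> x <= y `^ 2^-1.
Proof.
move=> x_ge0 xy; rewrite powR12_sqrt ?(le_trans (sqr_ge0 x)) //.
by rewrite -(ger0_norm x_ge0) -sqrtr_sqr ler_sqrt // (le_trans (sqr_ge0 x)).
Qed.

Lemma powR12_mulrr x : 0 <= x -> x `^ 2^-1 * x `^ 2^-1 = x.
Proof. by move=> x_ge0; rewrite powR12_sqrt // -expr2 sqr_sqrtr. Qed.

End PowerInequalities.

Definition Q1_weight (R : realType) (s a x tau : R) : R :=
  if (- 2^-1 <= s) && (s <= 2^-1) then (1 + a + x ^+ 2) `^ s
  else (1 + a + x ^+ 2) `^ s + (1 + `|tau|) `^ s.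

Lemma Q1boundE (R : realType) m (s b : R) (xi' : 'rV[R]_m) xn tau :
  Q1bound s b xi' xn tau
  = Q1_weight s (sqnorm xi') xn tau
    * (1 + `|tau + sqnorm xi' + xn ^+ 2|) `^ (- (2 * b)).
Proof. by rewrite /Q1bound /Q1_weight; case: ifP. Qed.

Definition Q1_factor (R : realType) (s a tau x : R) : R :=
  (1 + a + `|tau + a|) `^ s * x / (1 + `|tau + a|) `^ 2^-1.

Section Q1Factor.
Variable R : realType.
Implicit Types s a x tau : R.

Lemma Q1_weight_ge s a x tau : (1 + a + x ^+ 2) `^ s <= Q1_weight s a x tau.
Proof. by rewrite /Q1_weight; case: ifP; rewrite ?lerDl ?powR_ge0. Qed.

Lemma Q1_weight_ge0 s a x tau : 0 <= Q1_weight s a x tau.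
Proof. exact: le_trans (powR_ge0 _ _) (Q1_weight_ge _ _ _ _). Qed.

Lemma Q1_factor_le_powR s a tau x : 0 <= x -> x ^+ 2 <= `|tau + a| / 2 ->
  Q1_factor s a tau x <= (1 + a + `|tau + a|) `^ s.
Proof.
move=> x_ge0 x_small; have A_ge0 := normr_ge0 (tau + a).
rewrite ler_pdivrMr; last by apply: powR_gt0; lra.
by apply: ler_wpM2l; [exact: powR_ge0 | apply: sqr_le_powR12 => //; lra].
Qed.

Lemma Q1_factor_le_small s a tau x : 0 <= s <= 2^-1 -> 0 <= a -> 0 < x ->
  x ^+ 2 <= `|tau + a| / 2 -> Q1_factor s a tau x <= (1 + a + x ^+ 2) `^ s.
Proof.
move=> s_bounds a_ge0 x_gt0 x_small.
have [A_ge0 x2_ge0] := (normr_ge0 (tau + a), sqr_ge0 x).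
rewrite ler_pdivrMr; last by apply: powR_gt0; lra.
have sqrt_x2 : (x ^+ 2) `^ 2^-1 = x.
  by rewrite powR12_sqrt ?sqr_ge0 // sqrtr_sqr gtr0_norm.
rewrite -{1}sqrt_x2; apply: powR_interp_le => //; rewrite ?exprn_gt0 //; try lra.
nra.
Qed.

Lemma powR_normD_split_le s a x tau : 0 <= s -> 0 <= a ->
  (1 + a + `|tau + a|) `^ s
  <= 4 `^ s * ((1 + a + x ^+ 2) `^ s + (1 + `|tau|) `^ s).
Proof.
move=> s_ge0 a_ge0; have := ler_normD tau a; rewrite (ger0_norm a_ge0) => tau_a.
have [[A_ge0 tau_ge0] x2_ge0] := (normr_ge0 (tau + a), normr_ge0 tau, sqr_ge0 x).
apply: le_trans (_ : (2 * ((1 + a + x ^+ 2) + (1 + `|tau|))) `^ s <= _).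
  by apply: ge0_ler_powR; rewrite ?nnegrE; lra.
rewrite powRM; [|lra|lra]; have -> : (4 : R) = 2 * 2 by lra.
rewrite powRM; [|lra|lra]; rewrite -mulrA; apply: ler_wpM2l; first exact: powR_ge0.
by apply: powR_addr_le; lra.
Qed.

Lemma Q1_factor_le_weight s a tau x : 0 <= a -> 0 < x -> x ^+ 2 <= `|tau + a| / 2 ->
  Q1_factor s a tau x <= (1 + 4 `^ s) * Q1_weight s a x tau.
Proof.
move=> a_ge0 x_gt0 x_small; have x2_ge0 := sqr_ge0 x.
have to_powR := Q1_factor_le_powR s (ltW x_gt0) x_small.
have le_W k : k <= Q1_weight s a x tau -> k <= (1 + 4 `^ s) * Q1_weight s a x tau.
  by move=> kW; apply: le_trans kW _; rewrite mulrDl mul1r lerDl mulr_ge0 ?powR_ge0 ?Q1_weight_ge0.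
have [s_le0 | s_gt0] := lerP s 0.
  apply/le_W/(le_trans to_powR)/(le_trans _ (Q1_weight_ge _ _ _ _)).
  by apply: le0_ger_powR => //; have := normr_ge0 (tau + a); lra.
have [s_le_half | s_gt_half] := lerP s 2^-1.
  apply: le_W; rewrite /Q1_weight ifT; last by apply/andP; split; lra.
  by apply: Q1_factor_le_small => //; apply/andP; split; lra.
rewrite /Q1_weight ifF; last by apply/negP => /andP[_]; lra.
apply: le_trans to_powR (le_trans (powR_normD_split_le x tau (ltW s_gt0) a_ge0) _).
by apply: ler_wpM2r; rewrite ?addr_ge0 ?powR_ge0 ?lerDr.
Qed.

End Q1Factor.

Lemma Q1_support_le (R : realType) (s b eps a tau x : R) :
  0 <= b -> 0 <= eps -> eps <= 1 - 2 * b ->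
  0 <= a -> 0 < x -> x ^+ 2 <= `|tau + a| / 2 ->
  (1 + a + `|tau + a|) `^ s * (1 + `|tau + a|) `^ 2^-1 * x
    / (1 + `|tau + a + x ^+ 2|) `^ (2 - eps)
  <= 8 * (1 + 4 `^ s)
     * (Q1_weight s a x tau * (1 + `|tau + a + x ^+ 2|) `^ (- (2 * b))).
Proof.
move=> b_ge0 eps_ge0 eps_le a_ge0 x_gt0 x_small.
have [lo hi] := normD_small_bounds (sqr_ge0 x) x_small.
have A1_ge1 : 1 <= 1 + `|tau + a| by have := normr_ge0 (tau + a); lra.
have ratio := comparable_powR_ratio_le b_ge0 eps_ge0 eps_le A1_ge1 lo hi.
have factor := Q1_factor_le_weight s a_ge0 x_gt0 x_small; rewrite /Q1_factor in factor.
have YY := powR12_mulrr (le_trans ler01 A1_ge1).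
set Y := (1 + `|tau + a|) `^ 2^-1 in factor YY *.
set D := (1 + `|tau + a + x ^+ 2|) `^ (2 - eps) in ratio *.
have Y_gt0 : 0 < Y by apply: powR_gt0; lra.
have D_gt0 : 0 < D by apply: powR_gt0; lra.
have -> : (1 + a + `|tau + a|) `^ s * Y * x / D
          = (1 + a + `|tau + a|) `^ s * x / Y * (Y * Y / D).
  by field; rewrite !gt_eqF.
rewrite YY; apply: le_trans (ler_pM _ _ factor ratio) _.
- by rewrite divr_ge0 ?mulr_ge0 ?powR_ge0 ?(ltW x_gt0) ?(ltW Y_gt0).
- by rewrite divr_ge0 ?(ltW D_gt0); lra.
- by rewrite mulrCA !mulrA.
Qed.

Theorem lemma5p1 (R : realType) (n : nat) (s b eps : R) :
  (2 <= n)%N -> 0 <= b -> b < 2^-1 -> 0 < eps -> eps <= 1 - 2 * b ->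
  exists C : R, 0 < C /\
    forall (xi' : 'rV[R]_(n.-1)) (xn tau : R),
      Q1 s eps xi' xn tau <= C * Q1bound s b xi' xn tau.
Proof.
move=> _ b_ge0 _ eps_gt0 eps_le.
have four_ge0 := powR_ge0 4 s.
exists (8 * (1 + 4 `^ s)); split=> [|xi' xn tau]; first lra.
rewrite /Q1 Q1boundE /=.
have a_ge0 : 0 <= sqnorm xi' by apply: sumr_ge0 => i _; exact: sqr_ge0.
have rhs_ge0 : 0 <= 8 * (1 + 4 `^ s) * (Q1_weight s (sqnorm xi') xn tau
                 * (1 + `|tau + sqnorm xi' + xn ^+ 2|) `^ (- (2 * b))).
  by rewrite !mulr_ge0 ?powR_ge0 ?Q1_weight_ge0 //; lra.
case: ifP => [/andP[_ xn_small] | _] //.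
have [xn_le0 | xn_gt0] := lerP xn 0.
  apply: le_trans rhs_ge0.
  by rewrite mulr_le0_ge0 ?invr_ge0 ?powR_ge0 // mulr_ge0_le0 ?mulr_ge0 ?powR_ge0.
exact: Q1_support_le b_ge0 (ltW eps_gt0) eps_le a_ge0 xn_gt0 xn_small.
Qed.
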